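(* Let $\mathcal{X}'\subseteq\mathcal{X}$ be a set of pairwise backward kinematically inseparable observations and let $\mathcal{X}'_1,\mathcal{X}'_2\subset\mathcal{X}'$. For any policies $\pi_1,\pi_2\in\Upsilon$, $$\frac{\mathbb{P}_{\pi_1}(\mathcal{X}'_1)}{\mathbb{P}_{\pi_2}(\mathcal{X}'_1)}=\frac{\mathbb{P}_{\pi_1}(\mathcal{X}'_2)}{\mathbb{P}_{\pi_2}(\mathcal{X}'_2)}.$$
   Context: Block MDP: horizon $H$; finite latent states $\mathcal{S}=\sqcup_h\mathcal{S}_h$; countable observations $\mathcal{X}=\sqcup_h\mathcal{X}_h$; finite actions $\mathcal{A}$; start distribution $\mu\in\Delta(\mathcal{S}_1)$; transitions $T(\cdot\mid s,a)\in\Delta(\mathcal{S}_{h+1})$ for $s\in\mathcal{S}_h$; emissions $q(\cdot\mid s)\in\Delta(\mathcal{X}_h)$ with pairwise disjoint supports, decoder $g^\star$. Episodes: $s_1\sim\mu$, $x_h\sim q(\cdot\mid s_h)$, agent chooses $a_h$, $s_{h+1}\sim T(\cdot\mid s_h,a_h)$. $\Upsilon$ is the set of all policies $\mathcal{X}\to\Delta(\mathcal{A})$ (by layering these include all non-stationary policies); $\mathbb{P}_\pi(\mathcal{Y})$ is the probability that the trajectory under $\pi$ visits an observation in $\mathcal{Y}$. Observation transitions $T(x'\mid x,a)=q(x'\mid g^\star(x'))T(g^\star(x')\mid g^\star(x),a)$; for full-support $u\in\Delta(\mathcal{X}\times\mathcal{A})$, $\mathbb{P}_u(x,a\mid x')=\frac{T(x'\mid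 x,a)u(x,a)}{\sum_{\tilde x,\tilde a}T(x'\mid\tilde x,\tilde a)u(\tilde x,\tilde a)}$; $x_1',x_2'$ are backward kinematically inseparable if $\mathbb{P}_u(\cdot\mid x_1')=\mathbb{P}_u(\cdot\mid x_2')$ for every full-support $u$. *)

From HB Require Import structures.
From mathcomp Require Import all_boot all_order all_algebra.
From mathcomp Require Import all_classical all_reals.
From mathcomp Require Import ereal esum.
Set Implicit Arguments. Unset Strict Implicit. Unset Printing Implicit Defensive.
Import Order.TTheory GRing.Theory Num.Theory.
Local Open Scope classical_set_scope.
Local Open Scope ring_scope.

(* Conventions:
   - latent states S : finType, observations X : countType, actions A : finType;
   - layers are indexed 0 .. H-1 (layer h of the paper is ordinal h-1);
   - mu s = mu(s), T s a s' = T(s' | s, a), q s x = q(x | s), pi x a = pi(a | x);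
   - g is the decoder g^*. *)

Section BlockMDP.
Variables (R : realType) (H : nat) (S : finType) (X : countType) (A : finType).
Variables (layS : S -> 'I_H) (layX : X -> 'I_H).
Variables (mu : S -> R) (T : S -> A -> S -> R) (q : S -> X -> R) (g : X -> S).

(* Block MDP axioms. Transitions out of the last layer are zero: the episode
   ends after layer H (there is no layer H+1). *)
Definition is_block_mdp : Prop :=
  [/\ [/\ (forall s, 0 <= mu s), \sum_(s : S) mu s = 1 &
           (forall s, 0 < mu s -> val (layS s) = 0%N)],
      [/\ (forall s a s', 0 <= T s a s'),
           (forall s a, ((val (layS s)).+1 < H)%N -> \sum_(s' : S) T s a s' = 1) &
           (forall s a s', 0 < T s a s' -> val (layS s') = (val (layS s)).+1)],
      [/\ (forall s x, 0 <= q s x),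
           (forall s, (\esum_(x in [set: X]) (q s x)%:E = 1)%E) &
           (forall s x, 0 < q s x -> val (layX x) = val (layS s))] &
      (* pairwise disjoint emission supports, decoded by g *)
      (forall s x, 0 < q s x -> g x = s)].

Definition is_policy (pi : X -> A -> R) : Prop :=
  (forall x a, 0 <= pi x a) /\ (forall x, \sum_(a : A) pi x a = 1).

Fixpoint traj_weight_from (pi : X -> A -> R) (s : S) (a : A)
    (tr : seq (S * X * A)) : R :=
  if tr is (s', x', a') :: tr' then
    T s a s' * q s' x' * pi x' a' * traj_weight_from pi s' a' tr'
  else 1.

Definition traj_weight (pi : X -> A -> R) (tr : seq (S * X * A)) : R :=
  if tr is (s, x, a) :: tr' then
    mu s * q s x * pi x a * traj_weight_from pi s a tr'
  else 1.

Definition prob_visit (pi : X -> A -> R) (Y : set X) : R :=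
  fine (\esum_(tr in [set tr : H.-tuple (S * X * A) |
                       exists2 p, p \in tval tr & Y p.1.2])
          (traj_weight pi (tval tr))%:E)%E.

Definition obsT (x' x : X) (a : A) : R := q (g x') x' * T (g x) a (g x').

Definition full_support (u : X * A -> R) : Prop :=
  (forall xa, 0 < u xa) /\ (\esum_(xa in [set: X * A]) (u xa)%:E = 1)%E.

Definition condP (u : X * A -> R) (x' : X) : X * A -> R :=
  fun xa => obsT x' xa.1 xa.2 * u xa /
    fine (\esum_(y in [set: X * A]) (obsT x' y.1 y.2 * u y)%:E)%E.

Definition backward_kin_insep (x1 x2 : X) : Prop :=
  forall u, full_support u -> condP u x1 = condP u x2.

End BlockMDP.

(* Backward kinematic inseparability of x and x0 makes the conditionals
   P_u(. | x) and P_u(. | x0) coincide for a full-support u, so the observation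
   transitions into x are a fixed multiple of those into x0:
   T(x | x', a) = c_x T(x0 | x', a).  Hence every x in X' is entered, from the
   start distribution and from each state-action pair, with weight c_x times a
   common entry weight, and all of X' lies in one layer, so no further entry
   weight is collected once X' has been visited.  Summing over trajectories,
   P_pi(Y) = (sum_{x in Y} c_x) L_pi for every Y in X', with L_pi independent
   of Y, and the ratios agree.  If X' is never entered through a transition,
   it is only visited at the first step and P_pi(Y) does not depend on pi. *)

From HB Require Import structures.
From mathcomp Require Import all_boot all_order all_algebra.
From mathcomp Require Import all_classical all_reals.
From mathcomp Require Import ereal esum sequences.
From mathcomp Require Import ring zify.
Set Implicit Arguments. Unset Strict Implicit. Unset Printing Implicit Defensive.
Import Order.TTheory GRing.Theory Num.Theory.
Local Open Scope classical_set_scope.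
Local Open Scope ring_scope.

Section esum_lemmas.
Variable R : realType.
Local Open Scope ereal_scope.

Lemma esum_ge_term (T : choiceType) (D : set T) (a : T -> \bar R) x :
  D x -> a x <= \esum_(i in D) a i.
Proof.
move=> Dx; apply: esum_ge; exists [set x]; last by rewrite fsbig_set1.
by split; [exact: finite_set1 | move=> y ->].
Qed.

Lemma esumZl (T : choiceType) (D : set T) (r : \bar R) (a : T -> \bar R) :
  0 <= r -> (forall x, 0 <= a x) ->
  \esum_(i in D) (r * a i) = r * \esum_(i in D) a i.
Proof.
case: r => [r | | //] r0 a0.
  rewrite /esum -ereal_supZl //; last first.
    by apply/set0P; exists 0, set0; [exact: fsets_set0 | rewrite fsbig_set0].
  congr ereal_sup; apply/seteqP; split=> y /=.
    move=> [F [finF FD] <-]; exists (\sum_(x \in F) a x); first by exists F.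
    by rewrite !fsbig_finite //= ge0_sume_distrr.
  move=> [_ [F [finF FD] <-] <-]; exists F => //.
  by rewrite !fsbig_finite //= ge0_sume_distrr.
have [aD0 | aD_neq0] := eqVneq (\esum_(i in D) a i) 0.
  rewrite aD0 mule0; apply: esum1 => x Dx.
  suff -> : a x = 0 by rewrite mule0.
  by apply/eqP; rewrite eq_le a0 andbT -aD0 esum_ge_term.
have [x Dx ax_neq0] : exists2 x, D x & a x != 0.
  apply: contrapT => /forall2NP ax0; move/eqP: aD_neq0; apply.
  by apply: esum1 => x Dx; have [//|/negP/negPn/eqP] := ax0 x.
rewrite gt0_mulye ?lt0e ?aD_neq0 ?esum_ge0 //; apply/eqP; rewrite eq_le leey /=.
apply: le_trans (esum_ge_term (fun i => +oo * a i) Dx).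
by rewrite gt0_mulye ?lt0e ?ax_neq0 ?a0.
Qed.

Lemma esum_finT (T : finType) (a : T -> \bar R) :
  (forall x, 0 <= a x) -> \esum_(i in [set: T]) a i = \sum_(i : T) a i.
Proof.
move=> a0; rewrite esum_fset ?fsbig_finite //; try exact: finite_finset.
apply: perm_big; apply: uniq_perm; rewrite ?index_enum_uniq //.
by move=> x; rewrite in_fset_set ?mem_index_enum ?in_setT //; exact: finite_finset.
Qed.

Lemma esum_prodT (T1 T2 : choiceType) (a : T1 * T2 -> \bar R) :
  (forall x, 0 <= a x) ->
  \esum_(p in [set: T1 * T2]) a p =
  \esum_(i in [set: T1]) \esum_(j in [set: T2]) a (i, j).
Proof.
move=> a0; rewrite (esum_esum (a := fun i j => a (i, j))) //.
congr esum; last by apply/funext => -[].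
by apply/seteqP; split=> -[].
Qed.

Lemma esum_tupleS (T : choiceType) n (a : n.+1.-tuple T -> \bar R) :
  (forall t, 0 <= a t) ->
  \esum_(t in [set: n.+1.-tuple T]) a t =
  \esum_(e in [set: T]) \esum_(t in [set: n.-tuple T]) a [tuple of e :: t].
Proof.
move=> a0; rewrite -(@esum_prodT T (n.-tuple T) (fun p => a [tuple of p.1 :: p.2])) //.
rewrite (reindex_esum [set: T * n.-tuple T] _ (fun p => [tuple of p.1 :: p.2])) //.
split=> [// | [e1 t1] [e2 t2] _ _ /(congr1 val) [-> /val_inj ->] // | t _].
by exists (thead t, behead_tuple t); rewrite //= [RHS]tuple_eta.
Qed.

Lemma esum_prod3_sum (I J : finType) (K : choiceType)
    (a : I * K * J -> \bar R) : (forall p, 0 <= a p) ->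
  \esum_(p in [set: I * K * J]) a p =
  \esum_(k in [set: K]) \sum_(i : I) \sum_(j : J) a (i, k, j).
Proof.
move=> a0; rewrite esum_prodT //.
under eq_esum do rewrite esum_finT //.
rewrite (@esum_prodT I K (fun p => \sum_(j : J) a (p, j))) => [|p]; last exact: sume_ge0.
rewrite esum_finT => [|i]; last by apply: esum_ge0 => k _; exact: sume_ge0.
by rewrite esum_sum // => k i _ _; exact: sume_ge0.
Qed.

Lemma fine_mul2l_div (c L1 L2 : \bar R) :
  0 <= c -> 0 <= L1 -> 0 <= L2 -> (fine (c * L2) != 0)%R ->
  (fine (c * L1) / fine (c * L2) = fine L1 / fine L2)%R.
Proof.
move=> c0 L10 L20 cL2_neq0.
have fin_of_fine_mul (x y : \bar R) : 0 <= x -> 0 <= y -> (fine (x * y) != 0)%R ->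
    x \is a fin_num /\ (fine x != 0)%R.
  case: x => [x | |] // _ y0; last first.
    have [->|y_neq0] := eqVneq y 0; first by rewrite mule0 /= eqxx.
    by rewrite gt0_mulye ?lt0e ?y_neq0 //= eqxx.
  by move=> xy_neq0; split=> //=; apply: contra_neq xy_neq0 => ->; rewrite mul0e.
have [c_fin c_neq0] := fin_of_fine_mul _ _ c0 L20 cL2_neq0.
have [L2_fin L2_neq0] : L2 \is a fin_num /\ (fine L2 != 0)%R.
  by apply: (fin_of_fine_mul _ c) => //; rewrite muleC.
rewrite -(fineK c_fin) -(fineK L2_fin) -EFinM /= in cL2_neq0 *.
case: L1 L10 => [l1 | |] // _.
  by rewrite -EFinM /=; field; rewrite c_neq0 L2_neq0.
by rewrite gt0_muley ?lte_fin ?lt0r ?c_neq0 ?fine_ge0 //= !mul0r.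
Qed.

End esum_lemmas.

Lemma exists_pos_esum1 (R : realType) (T : countType) :
  T -> exists u : T -> R, (forall t, 0 < u t) /\ (\esum_(t in [set: T]) (u t)%:E = 1)%E.
Proof.
move=> t0; pose v (t : T) : R := (2 ^ (pickle t).+1)%:R^-1.
have v_gt0 t : 0 < v t by rewrite invr_gt0 ltr0n expn_gt0.
have v0 t : (0 <= (v t)%:E)%E by rewrite lee_fin ltW.
set E := (\esum_(t in [set: T]) (v t)%:E)%E.
have E_le1 : (E <= 1)%E.
  rewrite /E -(esum_image [set: T] pickle (fun n => (2 ^ n.+1)%:R^-1%:E)); last first.
    by move=> x y _ _; apply: (pcan_inj pickleK).
  apply: (@le_trans _ _ (\esum_(n in [set: nat]) (2 ^ n.+1)%:R^-1%:E)%E).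
    by rewrite esum_mkcond; apply: le_esum => n _; case: ifP; rewrite // lee_fin invr_ge0.
  rewrite -nneseries_esumT => [|n]; last by rewrite lee_fin invr_ge0.
  under eq_eseriesr do rewrite -[_^-1]div1r.
  exact: (epsilon_trick0 xpredT ler01).
have vt0_le_E : ((v t0)%:E <= E)%E by exact: esum_ge_term.
have E_lt_oo : (E < +oo)%E by rewrite (le_lt_trans E_le1) ?ltry.
have E_fin : E \is a fin_num by rewrite ge0_fin_numE // (le_trans (v0 t0)).
have E_gt0 : 0 < fine E by rewrite fine_gt0 // E_lt_oo (lt_le_trans _ vt0_le_E) ?lte_fin.
exists (fun t => (fine E)^-1 * v t); split=> [t | ]; first by rewrite mulr_gt0 ?invr_gt0.
under eq_esum do rewrite EFinM.
rewrite esumZl ?lee_fin ?invr_ge0 ?(ltW E_gt0) //.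
by rewrite -/E -(fineK E_fin) -EFinM mulVf ?gt_eqF.
Qed.

Section BlockMDP.
Variables (R : realType) (H : nat) (S : finType) (X : countType) (A : finType).
Variables (layS : S -> 'I_H) (layX : X -> 'I_H).
Variables (mu : S -> R) (T : S -> A -> S -> R) (q : S -> X -> R) (g : X -> S).
Hypothesis hMDP : is_block_mdp layS layX mu T q g.
Local Notation layer s := (val (layS s)).

Lemma mu_ge0 s : 0 <= mu s. Proof. by case: hMDP => -[]. Qed.

Lemma mu_layer s : mu s != 0 -> layer s = 0%N.
Proof. by case: hMDP => -[mu0 _ mu_lay] _ _ _ mu_neq0; apply: mu_lay; rewrite lt0r mu_neq0 mu0. Qed.

Lemma T_ge0 s a s' : 0 <= T s a s'. Proof. by case: hMDP => _ []. Qed.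

Lemma T_sum1 s a : ((layer s).+1 < H)%N -> \sum_(s' : S) T s a s' = 1.
Proof. by case: hMDP => _ [_ T_sum _] _ _; exact: T_sum. Qed.

Lemma T_layer s a s' : T s a s' != 0 -> layer s' = (layer s).+1.
Proof.
by case: hMDP => _ [_ _ T_lay] _ _ T_neq0; apply: (T_lay s a); rewrite lt0r T_neq0 T_ge0.
Qed.

Lemma q_ge0 s x : 0 <= q s x. Proof. by case: hMDP => _ _ []. Qed.

Lemma q_esum1 s : (\esum_(x in [set: X]) (q s x)%:E = 1)%E.
Proof. by case: hMDP => _ _ [_ q_sum _] _; exact: q_sum. Qed.

Lemma q_decode s x : q s x != 0 -> g x = s.
Proof. by case: hMDP => _ _ _ dec q_neq0; apply: dec; rewrite lt0r q_neq0 q_ge0. Qed.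

Lemma T_le1 s a s' : T s a s' <= 1.
Proof.
have [lt_sH | ge_sH] := ltnP (layer s).+1 H.
  by rewrite -(T_sum1 a lt_sH) (bigD1 s') //= lerDl sumr_ge0 // => *; exact: T_ge0.
have [-> // | /T_layer lay_s'] := eqVneq (T s a s') 0.
by move: (ltn_ord (layS s')); rewrite lay_s'; lia.
Qed.

Lemma q_le1 s x : q s x <= 1.
Proof. by rewrite -lee_fin -(q_esum1 s) esum_ge_term. Qed.

Lemma exists_emission s : exists x, q s x != 0.
Proof.
apply: contrapT => /forallNP q0; move: (q_esum1 s); rewrite esum1 => [/eqP | x _].
  by rewrite eq_sym eqe oner_eq0.
by have /negP/negbNE/eqP -> := q0 x.
Qed.

Lemma obsT_ge0 x' x a : 0 <= obsT T q g x' x a.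
Proof. by rewrite mulr_ge0 ?q_ge0 ?T_ge0. Qed.

Lemma obsT_le1 x' x a : obsT T q g x' x a <= 1.
Proof. by rewrite mulr_ile1 ?q_ge0 ?T_ge0 ?q_le1 ?T_le1. Qed.

Definition step_weight (t : S -> R) (pi : X -> A -> R) (e : S * X * A) : R :=
  t e.1.1 * q e.1.1 e.1.2 * pi e.1.2 e.2.

Lemma traj_weight_from_cons pi s a e tr :
  traj_weight_from T q pi s a (e :: tr) =
  step_weight (T s a) pi e * traj_weight_from T q pi e.1.1 e.2 tr.
Proof. by case: e => -[]. Qed.

Lemma traj_weight_cons pi e tr :
  traj_weight mu T q pi (e :: tr) =
  step_weight mu pi e * traj_weight_from T q pi e.1.1 e.2 tr.
Proof. by case: e => -[]. Qed.

Lemma step_weight_neq0 t pi e :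
  step_weight t pi e != 0 -> t e.1.1 != 0 /\ g e.1.2 = e.1.1.
Proof. by rewrite !mulf_eq0 !negb_or => /andP[/andP[t_neq0 /q_decode]]. Qed.

Lemma sum_emission (t : S -> R) x : \sum_(s : S) t s * q s x = t (g x) * q (g x) x.
Proof.
rewrite (bigD1 (g x)) //= big1 ?addr0 // => s s_neq.
suff -> : q s x = 0 by rewrite mulr0.
by apply/eqP; apply: contraNT s_neq => /q_decode ->.
Qed.

Definition cont_mass pi n s a : \bar R :=
  \esum_(tr in [set: n.-tuple (S * X * A)]) (traj_weight_from T q pi s a tr)%:E.

Definition visits (Y : set X) : set (seq (S * X * A)) :=
  [set tr : seq (S * X * A) | exists2 p, p \in tr & Y p.1.2].

Definition visit_mass pi n s a Y : \bar R :=
  \esum_(tr in [set: n.-tuple (S * X * A)])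
    (if tval tr \in visits Y then traj_weight_from T q pi s a tr else 0)%:E.

Definition visit_mass_at pi n Y (e : S * X * A) : \bar R :=
  if e.1.2 \in Y then cont_mass pi n e.1.1 e.2 else visit_mass pi n e.1.1 e.2 Y.

Lemma visits_cons Y e tr :
  (e :: tr \in visits Y) = (e.1.2 \in Y) || (tr \in visits Y).
Proof.
apply/idP/orP => [/set_mem [p] | [/set_mem eY | /set_mem [p p_tr pY]]].
- rewrite in_cons => /orP[/eqP -> eY | p_tr pY]; first by left; exact: mem_set.
  by right; apply: mem_set; exists p.
- by apply: mem_set; exists e; rewrite ?mem_head.
- by apply: mem_set; exists p; rewrite // in_cons p_tr orbT.
Qed.

Lemma prob_visit0 pi Y : prob_visit 0 mu T q pi Y = 0.
Proof. by rewrite /prob_visit esum1 // => tr [p]; rewrite tuple0. Qed.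

Section Policy.
Variable pi : X -> A -> R.
Hypothesis hpi : is_policy pi.

Lemma pi_ge0 x a : 0 <= pi x a. Proof. by case: hpi. Qed.
Lemma pi_sum1 x : \sum_(a : A) pi x a = 1. Proof. by case: hpi. Qed.

Lemma step_weight_ge0 t e : (forall s, 0 <= t s) -> 0 <= step_weight t pi e.
Proof. by move=> t0; rewrite !mulr_ge0 ?q_ge0 ?pi_ge0. Qed.

Lemma traj_weight_from_ge0 s a tr : 0 <= traj_weight_from T q pi s a tr.
Proof.
elim: tr s a => [|e tr IH] s a; first exact: ler01.
by rewrite traj_weight_from_cons mulr_ge0 ?step_weight_ge0 //; exact: T_ge0.
Qed.

Lemma esum_step_weight t (f : X -> \bar R) :
  (forall s, 0 <= t s) -> (forall x, 0 <= f x)%E ->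
  (\esum_(e in [set: S * X * A]) (step_weight t pi e)%:E * f e.1.2 =
   \esum_(x in [set: X]) \sum_(s : S) (t s * q s x)%:E * f x)%E.
Proof.
move=> t0 f0; rewrite esum_prod3_sum => [|e]; last first.
  by rewrite mule_ge0 ?lee_fin ?step_weight_ge0.
apply: eq_esum => x _; apply: eq_bigr => s _.
rewrite /= -ge0_sume_distrl => [|a _]; last by rewrite lee_fin step_weight_ge0.
by rewrite sumEFin /step_weight /= -mulr_sumr pi_sum1 mulr1.
Qed.

Lemma esum_step_weight_total t : (forall s, 0 <= t s) ->
  (\esum_(e in [set: S * X * A]) (step_weight t pi e)%:E = (\sum_(s : S) t s)%:E)%E.
Proof.
move=> t0.
transitivity (\esum_(e in [set: S * X * A]) (step_weight t pi e)%:E * 1)%E.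
  by apply: eq_esum => e _; rewrite mule1.
rewrite (esum_step_weight (f := fun=> 1%E)) // esum_sum => [|x s _ _]; last first.
  by rewrite mule1 lee_fin mulr_ge0 ?q_ge0.
rewrite -sumEFin; apply: eq_bigr => s _.
under eq_esum do rewrite mule1 EFinM.
by rewrite esumZl ?lee_fin // => [|x]; [rewrite q_esum1 mule1 | rewrite lee_fin q_ge0].
Qed.

Lemma cont_mass0 s a : cont_mass pi 0 s a = 1%E.
Proof.
rewrite /cont_mass (_ : [set: 0.-tuple _] = [set [tuple]]); last first.
  by apply/seteqP; split => tr // _; rewrite (tuple0 tr).
by rewrite esum_set1 // lee_fin ler01.
Qed.

Lemma visit_mass0 s a Y : visit_mass pi 0 s a Y = 0%E.
Proof.
apply: esum1 => tr _; rewrite (tuple0 tr) /=.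
by case: ifP => // /set_mem [].
Qed.

Lemma cont_mass_cons n s a :
  cont_mass pi n.+1 s a =
  (\esum_(e in [set: S * X * A]) (step_weight (T s a) pi e)%:E * cont_mass pi n e.1.1 e.2)%E.
Proof.
rewrite /cont_mass esum_tupleS => [|tr]; last by rewrite lee_fin traj_weight_from_ge0.
apply: eq_esum => e _; rewrite -esumZl ?lee_fin ?step_weight_ge0 //; last first.
- by move=> tr; rewrite lee_fin traj_weight_from_ge0.
- exact: T_ge0.
by apply: eq_esum => tr _; rewrite [tval _]/= traj_weight_from_cons EFinM.
Qed.

Lemma esum_visits_cons (t : S -> R) (W : seq (S * X * A) -> R) n Y :
  (forall s, 0 <= t s) ->
  (forall e tr, W (e :: tr) = step_weight t pi e * traj_weight_from T q pi e.1.1 e.2 tr) ->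
  (\esum_(tr in [set: n.+1.-tuple (S * X * A)])
     (if tval tr \in visits Y then W tr else 0)%:E =
   \esum_(e in [set: S * X * A]) (step_weight t pi e)%:E * visit_mass_at pi n Y e)%E.
Proof.
move=> t0 W_cons; rewrite esum_tupleS; last first.
  move=> [[|e tr] sz] //; case: ifP; rewrite lee_fin // W_cons.
  by rewrite mulr_ge0 ?step_weight_ge0 ?traj_weight_from_ge0.
apply: eq_esum => e _; rewrite /visit_mass_at /cont_mass /visit_mass.
have tw0 s a (tr : n.-tuple _) : (0 <= (traj_weight_from T q pi s a tr)%:E)%E.
  by rewrite lee_fin traj_weight_from_ge0.
case: ifP => eY; rewrite -esumZl ?lee_fin ?step_weight_ge0 //; last first.
- by move=> tr; case: ifP.
- apply: eq_esum => tr _; rewrite [tval _]/= visits_cons W_cons eY /=.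
  by rewrite -EFinM; case: ifP; rewrite ?mulr0.
- by apply: eq_esum => tr _; rewrite [tval _]/= visits_cons W_cons eY /= EFinM.
Qed.

Lemma visit_mass_cons n s a Y :
  visit_mass pi n.+1 s a Y =
  (\esum_(e in [set: S * X * A]) (step_weight (T s a) pi e)%:E * visit_mass_at pi n Y e)%E.
Proof. exact: esum_visits_cons n Y (T_ge0 s a) (traj_weight_from_cons pi s a). Qed.

Lemma prob_visit_cons n Y :
  prob_visit n.+1 mu T q pi Y =
  fine (\esum_(e in [set: S * X * A]) (step_weight mu pi e)%:E * visit_mass_at pi n Y e)%E.
Proof.
rewrite /prob_visit esum_mkcond -(esum_visits_cons n Y mu_ge0 (traj_weight_cons pi)).
congr fine; apply: eq_esum => tr _.
by rewrite (fun_if EFin); congr (if _ then _ else _); apply/idP/idP => /set_mem/mem_set.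
Qed.

Lemma cont_mass_eq1 n s a : (layer s + n < H)%N -> cont_mass pi n s a = 1%E.
Proof.
elim: n s a => [|n IH] s a lt_snH; first exact: cont_mass0.
rewrite cont_mass_cons.
transitivity (\esum_(e in [set: S * X * A]) (step_weight (T s a) pi e)%:E)%E.
  apply: eq_esum => e _.
  have [-> | /step_weight_neq0 [/T_layer lay_e _]] := eqVneq (step_weight (T s a) pi e) 0.
    by rewrite !mul0e.
  by rewrite IH ?mule1 // lay_e addSn -addnS.
by rewrite esum_step_weight_total ?T_sum1 // => [|s']; [lia | exact: T_ge0].
Qed.

End Policy.

(* mu (g x) * q (g x) x and T s a (g x) * q (g x) x are the weights with which
   the observation x is entered from the start and from (s, a). *)
Record entry_factorization (Xp : set X) (c : X -> R) (gamma : R)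
    (beta : S -> A -> R) : Prop := EntryFactorization {
  c_ge0 : forall x, 0 <= c x;
  gamma_ge0 : 0 <= gamma;
  beta_ge0 : forall s a, 0 <= beta s a;
  mu_q_factor : forall x, Xp x -> mu (g x) * q (g x) x = c x * gamma;
  T_q_factor : forall x, Xp x -> forall s a, T s a (g x) * q (g x) x = c x * beta s a;
  beta_layer : forall x, Xp x -> forall s a, beta s a != 0 -> (layer s < layer (g x))%N }.

Section EntryFactorization.
Variables (Xp : set X) (c : X -> R) (gamma : R) (beta : S -> A -> R).
Hypothesis hfact : entry_factorization Xp c gamma beta.

Fixpoint entry_mass pi n s a : \bar R :=
  if n is n'.+1 then
    ((beta s a)%:E +
     \esum_(e in [set: S * X * A]) (step_weight (T s a) pi e)%:E * entry_mass pi n' e.1.1 e.2)%E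
  else 0%E.

Definition init_entry_mass pi n : \bar R :=
  (gamma%:E +
   \esum_(e in [set: S * X * A]) (step_weight mu pi e)%:E * entry_mass pi n e.1.1 e.2)%E.

Lemma entry_mass_ge0 pi n s a : is_policy pi -> (0 <= entry_mass pi n s a)%E.
Proof.
move=> hpi; elim: n s a => [|n IH] s a //=.
rewrite adde_ge0 ?lee_fin ?(beta_ge0 hfact) //.
by apply: esum_ge0 => e _; rewrite mule_ge0 ?lee_fin ?step_weight_ge0 //; exact: T_ge0.
Qed.

Lemma init_entry_mass_ge0 pi n : is_policy pi -> (0 <= init_entry_mass pi n)%E.
Proof.
move=> hpi; rewrite adde_ge0 ?lee_fin ?(gamma_ge0 hfact) //.
apply: esum_ge0 => e _; rewrite mule_ge0 ?lee_fin ?entry_mass_ge0 //.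
by apply: step_weight_ge0 => //; exact: mu_ge0.
Qed.

Lemma entry_mass_after_visit pi n x s a :
  Xp x -> (layer (g x) <= layer s)%N -> entry_mass pi n s a = 0%E.
Proof.
move=> xXp; elim: n s a => [|n IH] s a le_xs //=.
have -> : beta s a = 0.
  by apply/eqP; apply: contraTT le_xs => /(beta_layer hfact xXp); rewrite -ltnNge.
rewrite add0e; apply: esum1 => e _.
have [-> | /step_weight_neq0 [/T_layer lay_e _]] := eqVneq (step_weight (T s a) pi e) 0.
  by rewrite mul0e.
by rewrite IH ?mule0 // lay_e (leq_trans le_xs).
Qed.

Section Policy.
Variable pi : X -> A -> R.
Hypothesis hpi : is_policy pi.

Lemma visit_mass_at_factor (t : S -> R) (delta : R) n (Y : set X) :
  Y `<=` Xp -> (forall s, 0 <= t s) -> 0 <= delta ->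
  (forall x, Xp x -> t (g x) * q (g x) x = c x * delta) ->
  (forall e, step_weight t pi e != 0 ->
     cont_mass pi n e.1.1 e.2 = 1%E /\
     visit_mass pi n e.1.1 e.2 Y = ((\esum_(x in Y) (c x)%:E) * entry_mass pi n e.1.1 e.2)%E) ->
  (\esum_(e in [set: S * X * A]) (step_weight t pi e)%:E * visit_mass_at pi n Y e =
   (\esum_(x in Y) (c x)%:E) *
     (delta%:E +
      \esum_(e in [set: S * X * A]) (step_weight t pi e)%:E * entry_mass pi n e.1.1 e.2))%E.
Proof.
move=> YXp t0 delta0 t_factor next_mass.
set cY := (\esum_(x in Y) (c x)%:E)%E.
have cY0 : (0 <= cY)%E by apply: esum_ge0 => x _; rewrite lee_fin (c_ge0 hfact).
have sw0 e : (0 <= (step_weight t pi e)%:E)%E by rewrite lee_fin step_weight_ge0.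
have indicator0 x : (0 <= (if x \in Y then 1 else 0 : \bar R))%E by case: ifP.
transitivity (\esum_(e in [set: S * X * A])
   ((step_weight t pi e)%:E * (if e.1.2 \in Y then 1 else 0) +
    cY * ((step_weight t pi e)%:E * entry_mass pi n e.1.1 e.2)))%E.
  apply: eq_esum => e _; rewrite /visit_mass_at.
  have [-> | sw_neq0] := eqVneq (step_weight t pi e) 0.
    by rewrite !mul0e mule0 adde0.
  have [mass1 visitE] := next_mass e sw_neq0; have [_ g_e] := step_weight_neq0 sw_neq0.
  case: ifPn => [/set_mem eY | _]; last by rewrite visitE mule0 add0e muleCA.
  rewrite mass1 mule1 (@entry_mass_after_visit _ _ e.1.2) ?g_e ?mule0 ?adde0 //.
  exact: YXp.
rewrite esumD => [||e _]; last first.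
- by rewrite mule_ge0 ?mule_ge0 ?entry_mass_ge0.
- by move=> e _; rewrite mule_ge0.
rewrite esumZl // => [|e]; last by rewrite mule_ge0 ?entry_mass_ge0.
rewrite ge0_muleDr ?lee_fin ?esum_ge0 // => [|e _]; last by rewrite mule_ge0 ?entry_mass_ge0.
congr (_ + _); rewrite (esum_step_weight hpi (f := fun x => if x \in Y then 1%E else 0%E)) //.
transitivity (\esum_(x in [set: X]) (t (g x) * q (g x) x)%:E * (if x \in Y then 1 else 0))%E.
  apply: eq_esum => x _; rewrite -ge0_sume_distrl => [|s _].
    by rewrite sumEFin sum_emission.
  by rewrite lee_fin mulr_ge0 ?q_ge0.
rewrite muleC -esumZl ?lee_fin // => [|x]; last by rewrite lee_fin (c_ge0 hfact).
rewrite [RHS]esum_mkcond; apply: eq_esum => x _.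
case: ifP => [/set_mem xY | _]; last by rewrite mule0.
by rewrite mule1 t_factor ?EFinM 1?muleC //; exact: YXp.
Qed.

Lemma visit_mass_factor n s a Y :
  Y `<=` Xp -> (layer s + n < H)%N ->
  visit_mass pi n s a Y = ((\esum_(x in Y) (c x)%:E) * entry_mass pi n s a)%E.
Proof.
move=> YXp; elim: n s a => [|n IH] s a lt_snH; first by rewrite visit_mass0 mule0.
rewrite visit_mass_cons //; apply: visit_mass_at_factor => //.
- exact: T_ge0.
- exact: (beta_ge0 hfact).
- by move=> x xXp; exact: (T_q_factor hfact).
move=> e /step_weight_neq0 [/T_layer lay_e _].
have lt_enH : (layer e.1.1 + n < H)%N by rewrite lay_e addSn -addnS.
by rewrite cont_mass_eq1 // IH.
Qed.

Lemma prob_visit_factor n Y :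
  Y `<=` Xp -> (n < H)%N ->
  prob_visit n.+1 mu T q pi Y = fine ((\esum_(x in Y) (c x)%:E) * init_entry_mass pi n)%E.
Proof.
move=> YXp lt_nH; rewrite prob_visit_cons //; congr fine; apply: visit_mass_at_factor => //.
- exact: mu_ge0.
- exact: (gamma_ge0 hfact).
- exact: (mu_q_factor hfact).
move=> e /step_weight_neq0 [/mu_layer lay_e _].
by rewrite cont_mass_eq1 ?visit_mass_factor // lay_e.
Qed.

End Policy.
End EntryFactorization.

Lemma insep_obsT_proportional (Xp : set X) x0 x'0 a0 :
  (forall x1 x2, Xp x1 -> Xp x2 -> backward_kin_insep T q g x1 x2) ->
  Xp x0 -> 0 < obsT T q g x0 x'0 a0 ->
  exists c : X -> R, (forall x, 0 <= c x) /\
    forall x, Xp x -> 0 < c x /\ forall x' a, obsT T q g x x' a = c x * obsT T q g x0 x' a.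
Proof.
move=> hinsep x0Xp obsT0_gt0.
have [u [u_gt0 u_sum1]] := exists_pos_esum1 R (x'0, a0).
pose D x := fine (\esum_(y in [set: X * A]) (obsT T q g x y.1 y.2 * u y)%:E)%E.
have D_ge0 x : 0 <= D x.
  by apply/fine_ge0/esum_ge0 => y _; rewrite lee_fin mulr_ge0 ?obsT_ge0 ?ltW.
have D0_gt0 : 0 < D x0.
  apply: fine_gt0; apply/andP; split.
    apply: (@lt_le_trans _ _ (obsT T q g x0 x'0 a0 * u (x'0, a0))%:E).
      by rewrite lte_fin mulr_gt0.
    exact: (esum_ge_term (fun y => (obsT T q g x0 y.1 y.2 * u y)%:E) (x := (x'0, a0))).
  apply: (@le_lt_trans _ _ 1%E); last exact: ltry.
  rewrite -u_sum1; apply: le_esum => y _.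
  by rewrite lee_fin ler_piMl ?obsT_le1 ?ltW.
have condE x x' a : Xp x ->
    obsT T q g x x' a * u (x', a) / D x = obsT T q g x0 x' a * u (x', a) / D x0.
  by move=> xXp; exact: (congr1 (fun f => f (x', a)) (hinsep x x0 xXp x0Xp u (conj u_gt0 u_sum1))).
have cond0_gt0 : 0 < obsT T q g x0 x'0 a0 * u (x'0, a0) / D x0.
  by apply: divr_gt0 => //; exact: mulr_gt0 (u_gt0 _).
have D_neq0 x : Xp x -> D x != 0.
  by move=> xXp; apply: contraTneq cond0_gt0 => Dx0; rewrite -(condE x) // Dx0 invr0 mulr0 ltxx.
exists (fun x => D x / D x0); split=> [x | x xXp]; first by rewrite divr_ge0.
split=> [|x' a]; first by rewrite divr_gt0 // lt0r D_neq0 ?D_ge0.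
have u_neq0 : u (x', a) != 0 by rewrite gt_eqF.
have -> : obsT T q g x x' a = obsT T q g x x' a * u (x', a) / D x * D x / u (x', a).
  by field; rewrite u_neq0 D_neq0.
by rewrite condE //; field; rewrite u_neq0 gt_eqF.
Qed.

Lemma insep_entry_factorization (Xp : set X) :
  (forall x1 x2, Xp x1 -> Xp x2 -> backward_kin_insep T q g x1 x2) ->
  exists c gamma beta, entry_factorization Xp c gamma beta.
Proof.
move=> hinsep.
have [[x0 [x'0 [a0 [x0Xp obsT0_gt0]]]] | no_entry] :=
  pselect (exists x0 x' a, Xp x0 /\ 0 < obsT T q g x0 x' a).
  have [c [c0 c_prop]] := insep_obsT_proportional hinsep x0Xp obsT0_gt0.
  have layer_Xp x : Xp x -> layer (g x) = (layer (g x'0)).+1.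
    move=> xXp; have [cx_gt0 cxE] := c_prop x xXp.
    have : obsT T q g x x'0 a0 != 0 by rewrite cxE mulf_neq0 ?gt_eqF.
    by rewrite mulf_eq0 negb_or => /andP[_ /T_layer].
  exists c, 0, (fun s a => T s a (g x0) * q (g x0) x0); split => //.
  - by move=> s a; rewrite mulr_ge0 ?T_ge0 ?q_ge0.
  - move=> x xXp; rewrite mulr0.
    have [-> | /mu_layer] := eqVneq (mu (g x)) 0; first by rewrite mul0r.
    by rewrite layer_Xp.
  - move=> x xXp s a; have [x' /q_decode gx'] := exists_emission s.
    have [_ cxE] := c_prop x xXp; have := cxE x' a.
    by rewrite /obsT gx' mulrC => ->; rewrite [q _ _ * _]mulrC.
  - move=> x xXp s a; rewrite mulf_eq0 negb_or => /andP[/T_layer lay_x0 _].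
    by rewrite layer_Xp // -(layer_Xp x0 x0Xp) lay_x0.
exists (fun x => mu (g x) * q (g x) x), 1, (fun _ _ => 0); split => //.
- by move=> x; rewrite mulr_ge0 ?mu_ge0 ?q_ge0.
- by move=> x xXp; rewrite mulr1.
- move=> x xXp s a; rewrite mulr0; apply/eqP; apply: contraT => obsT_neq0.
  have [x' /q_decode gx'] := exists_emission s.
  exfalso; apply: no_entry; exists x, x', a; split=> //.
  by rewrite /obsT gx' lt0r mulrC obsT_neq0 mulr_ge0 ?T_ge0 ?q_ge0.
- by move=> x _ s a; rewrite eqxx.
Qed.

End BlockMDP.

Theorem mainTheorem6 (R : realType) (H : nat) (S : finType) (X : countType)
  (A : finType) (layS : S -> 'I_H) (layX : X -> 'I_H)
  (mu : S -> R) (T : S -> A -> S -> R) (q : S -> X -> R) (g : X -> S)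
  (hMDP : is_block_mdp layS layX mu T q g)
  (Xp Xp1 Xp2 : set X)
  (hinsep : forall x1 x2, Xp x1 -> Xp x2 -> backward_kin_insep T q g x1 x2)
  (hsub1 : Xp1 `<=` Xp) (hsub2 : Xp2 `<=` Xp)
  (pi1 pi2 : X -> A -> R) (hpi1 : is_policy pi1) (hpi2 : is_policy pi2)
  (hden1 : prob_visit H mu T q pi2 Xp1 != 0)
  (hden2 : prob_visit H mu T q pi2 Xp2 != 0) :
  prob_visit H mu T q pi1 Xp1 / prob_visit H mu T q pi2 Xp1 =
  prob_visit H mu T q pi1 Xp2 / prob_visit H mu T q pi2 Xp2.
Proof.
case: H layS layX hMDP hden1 hden2 => [|n] layS layX hMDP hden1 hden2.
  by rewrite prob_visit0 eqxx in hden1.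
have [c [gamma [beta hfact]]] := insep_entry_factorization hMDP hinsep.
rewrite !(prob_visit_factor hMDP hfact) // in hden1 hden2 *.
by rewrite !fine_mul2l_div ?esum_ge0 ?(init_entry_mass_ge0 hMDP hfact) // => x _;
  rewrite lee_fin (c_ge0 hfact).
Qed.
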